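(* In a finite dynamic game as described in the context, suppose $K^i$ is unilaterally sufficient information for player $i$, and let $g^{-i}$ be a fully mixed behavioral strategy profile of the players other than $i$. For $\tau\in\mathcal{T}$ define $$Q_\tau^i(h_\tau^i,u_\tau^i)=\mathbb{E}^{g^{-i}}[R_\tau^i\mid h_\tau^i,u_\tau^i]+\max_{\tilde g_{\tau+1:T}^i}\mathbb{E}^{\tilde g_{\tau+1:T}^i,g^{-i}}\Big[\sum_{t=\tau+1}^T R_t^i\,\Big|\,h_\tau^i,u_\tau^i\Big],$$ the maximum being over behavioral strategies of player $i$ for times $\tau+1,\dots,T$. Then there exists a function $\hat Q_\tau^i:\mathcal{K}_\tau^i\times\mathcal{U}_\tau^i\to[-T,T]$ such that $Q_\tau^i(h_\tau^i,u_\tau^i)=\hat Q_\tau^i(k_\tau^i,u_\tau^i)$, where $k_\tau^i$ is the compression of $h_\tau^i$.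
   Context: Game model: finite set of players $\mathcal{I}$, times $\mathcal{T}=\{1,\dots,T\}$. At time $t$ each player $i$ takes action $U_t^i\in\mathcal{U}_t^i$, obtains reward $R_t^i\in[-1,1]$ and learns new information $Z_t^i\in\mathcal{Z}_t^i$. There is a state $X_t\in\mathcal{X}_t$ with $(X_{t+1},Z_t,R_t)=f_t(X_t,U_t,W_t)$ for fixed functions $f_t$. Primitive random variables $(X_1,H_1)$ and $W_1,\dots,W_T$ are mutually independent with commonly known distributions. All sets are finite. Perfect recall: $H_t^i=(H_1^i,Z_{1:t-1}^i)\in\mathcal{H}_t^i$, and $U_t^i$ is a component of $Z_t^i$. Behavioral strategy $g_t^i:\mathcal{H}_t^i\to\Delta(\mathcal{U}_t^i)$; fully mixed means every action has positive probability at every history. Conditional quantities given $(h_\tau^i,u_\tau^i)$ under $g^{-i}$ alone do not depend on player $i$'s strategy. A realization is admissible under $g$ if it has positive probability under $g$. Compression: $K_1^i=\iota_1^i(H_1^i)$, $K_t^i=\iota_t^i(K_{t-1}^i,Z_{t-1}^i)$ for fixed maps, finite value sets $\mathcal{K}_t^i$. Unilaterally sufficient information (USI): $K^i$ is USI for player $i$ if there exist $F_t^{i,g^i}:\mathcal{K}_t^i\to\Delta(\mathcal{H}_t^i)$ depending only on $g^i$ and $\Phi_t^{i,g^{-i}}:\mathcal{K}_t^i\to\Delta(\mathcal{X}_t\times\mathcal{H}_t^{-i})$ depending only on $g^{-i}$ with $\Pr^g(x_t,h_t\mid k_t^i)=F_t^{i,g^i}(h_t^i\mid k_t^i)\Phi_t^{i,g^{-i}}(x_t,h_t^{-i}\mid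 k_t^i)$ for all behavioral profiles $g$, all $t$, all $k_t^i$ admissible under $g$ (with $x_t,h_t^i,h_t^{-i}$ ranging independently; the left side is $0$ if they disagree on shared components). *)

From HB Require Import structures.
From mathcomp Require Import all_boot all_order all_algebra.
From mathcomp Require Import reals.
Set Implicit Arguments. Unset Strict Implicit. Unset Printing Implicit Defensive.
Import Order.TTheory GRing.Theory Num.Theory.
Local Open Scope ring_scope.

(* Times are 0-based: t = 0, ..., horizon-1
   correspond to the paper's times 1, ..., T.  The time-dependent finite sets
   X_t, W_t, Z_t^j, U_t^j are all embedded in single finite types; the
   time-dependent action sets U_t^j are the subsets [avail t j]. *)
Record game (R : realType) := Game {
  player : finType;
  horizon : nat;
  state : finType;
  init_info : player -> finType;
  noise : finType;
  action : player -> finType;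
  info : player -> finType;
  avail : nat -> forall j, {set action j};
  P0 : state -> {dffun forall j, init_info j} -> R;  (* law of (X_1, H_1) *)
  PW : nat -> noise -> R;
  dyn : nat -> state -> {dffun forall j, action j} -> noise ->
        state * {dffun forall j, info j} * {ffun player -> R}
}.

Arguments player {R} _.
Arguments horizon {R} _.
Arguments state {R} _.
Arguments init_info {R} _ _.
Arguments noise {R} _.
Arguments action {R} _ _.
Arguments info {R} _ _.
Arguments avail {R} _ _ _.
Arguments P0 {R} _ _ _.
Arguments PW {R} _ _ _.
Arguments dyn {R} _ _ _ _ _.

Section GameDefs.
Variable R : realType.
Variable G : game R.

Local Notation I := (player G).
Local Notation T := (horizon G).
Definition jact := {dffun forall j, action G j}.
Definition jinfo := {dffun forall j, info G j}.
Definition jinit := {dffun forall j, init_info G j}.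

Definition game_ok : Prop :=
  [/\ (forall x h, 0 <= P0 G x h) /\
        \sum_(xh : state G * jinit) P0 G xh.1 xh.2 = 1,
      (forall t, (t < T)%N -> (forall w, 0 <= PW G t w) /\ \sum_w PW G t w = 1),
      (forall t j, (t < T)%N -> avail G t j != finset.set0),
      (forall t x u w j, (t < T)%N -> -1 <= (dyn G t x u w).2 j <= 1) &
      (* perfect recall: U_t^j is a component of Z_t^j *)
      (exists proj : nat -> forall j, info G j -> action G j,
        forall t x (u : jact) w, (t < T)%N -> (forall j, u j \in avail G t j) ->
          forall j, proj t j ((dyn G t x u w).1.2 j) = u j)].

Definition hist_seq j := (init_info G j * seq (info G j))%type.
Definition hist j (t : nat) := (init_info G j * t.-tuple (info G j))%type.
Definition hseq j t (h : hist j t) : hist_seq j := (h.1, tval h.2).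

Definition strategy j := nat -> hist_seq j -> action G j -> R.
Definition profile := forall j, strategy j.

Definition valid_strategy j (s : strategy j) : Prop :=
  forall t, (t < T)%N -> forall h : hist j t,
    [/\ (forall u, 0 <= s t (hseq h) u),
        (forall u, u \notin avail G t j -> s t (hseq h) u = 0) &
        \sum_u s t (hseq h) u = 1].

Definition fully_mixed j (s : strategy j) : Prop :=
  forall t, (t < T)%N -> forall (h : hist j t) u, u \in avail G t j ->
    0 < s t (hseq h) u.

Definition valid_profile (g : profile) := forall j, valid_strategy (g j).

(* sample paths: primitive data plus the actions and noises of all times *)
Definition gpath := (state G * jinit * T.-tuple (jact * noise G))%type.

Record out := Out { o_x : state G; o_z : jinfo; o_r : {ffun I -> R} }.

Fixpoint run (t : nat) (x : state G) (s : seq (jact * noise G)) : seq out :=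
  match s with
  | [::] => [::]
  | uw :: s' => let y := dyn G t x uw.1 uw.2 in
                Out x y.1.2 y.2 :: run t.+1 y.1.1 s'
  end.

Definition outs (p : gpath) := run 0 p.1.1 (tval p.2).
Definition st_at (p : gpath) (t : nat) := nth p.1.1 (map o_x (outs p)) t.
Definition hist_at (p : gpath) j (t : nat) : hist_seq j :=
  (p.1.2 j, take t [seq o_z o j | o <- outs p]).
Definition act_at (p : gpath) (t : 'I_T) j := (tnth p.2 t).1 j.
Definition rew_at (p : gpath) j (t : nat) := nth 0 [seq o_r o j | o <- outs p] t.

Definition path_prob (g : profile) (p : gpath) : R :=
  P0 G p.1.1 p.1.2 *
  \prod_(t < T) ((\prod_j g j t (hist_at p j t) (act_at p t j)) *
                 PW G t (tnth p.2 t).2).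

Definition Pr (g : profile) (E : pred gpath) := \sum_(p | E p) path_prob g p.
Definition CE (g : profile) (E : pred gpath) (Y : gpath -> R) :=
  (\sum_(p | E p) path_prob g p * Y p) / Pr g E.

Definition merge_prof (i : I) (gi g : profile) : profile :=
  fun j => if j == i then gi j else g j.
Definition splice j (tau : nat) (gi gt : strategy j) : strategy j :=
  fun t => if (t <= tau)%N then gi t else gt t.
Definition splice_prof (i : I) (tau : nat) (gi gt : profile) : profile :=
  fun j => splice tau (gi j) (gt j).

Section Player.
Variable i : I.
Variables (K : finType) (iota1 : init_info G i -> K)
          (iota : nat -> K -> info G i -> K).

Fixpoint compr (t : nat) (k : K) (s : seq (info G i)) : K :=
  match s with [::] => k | z :: s' => compr t.+1 (iota t k z) s' end.
Definition compress (h : hist_seq i) : K := compr 0 (iota1 h.1) h.2.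

Definition others_hist (t : nat) :=
  {dffun forall j : {j : I | j != i}, hist (val j) t}.

Definition is_distr (T0 : finType) (m : T0 -> R) :=
  (forall a, 0 <= m a) /\ \sum_a m a = 1.

Definition USI : Prop :=
  exists (F : profile -> forall t : 'I_T, K -> hist i t -> R)
         (Phi : profile -> forall t : 'I_T, K -> state G * others_hist t -> R),
  [/\ (forall g g', valid_profile g -> valid_profile g' -> g i = g' i -> F g = F g'),
      (forall g g', valid_profile g -> valid_profile g' ->
          (forall j, j != i -> g j = g' j) -> Phi g = Phi g') &
      forall g, valid_profile g -> forall (t : 'I_T) (k : K),
        is_distr (F g t k) /\ is_distr (Phi g t k) /\
        (0 < Pr g (fun p => compress (hist_at p i t) == k) ->
         forall x (hi : hist i t) (ho : others_hist t),
           Pr g (fun p => [&& compress (hist_at p i t) == k, st_at p t == x,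
                             hist_at p i t == hseq hi &
                             [forall j, hist_at p (val j) t == hseq (ho j)]])
             / Pr g (fun p => compress (hist_at p i t) == k)
           = F g t k hi * Phi g t k (x, ho))].

Definition event (tau : 'I_T) (h : hist i tau) (u : action G i) : pred gpath :=
  fun p => (hist_at p i tau == hseq h) && (act_at p tau i == u).

(* Q_tau^i(h,u), computed with player i's strategy gi up to time tau and the
   others' profile g (the i-component of g is irrelevant) *)
Definition Qfun (g gi : profile) (tau : 'I_T) (h : hist i tau) (u : action G i) : R :=
  CE (merge_prof i gi g) (event h u) (fun p => rew_at p i tau) +
  sup (fun v => exists gt : profile, valid_strategy (gt i) /\
         v = CE (merge_prof i (splice_prof i tau gi gt) g) (event h u)
               (fun p => \sum_(t < T | (tau < t)%N) rew_at p i t)).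

End Player.
End GameDefs.

From mathcomp Require Import all_boot all_order all_algebra.
From mathcomp Require Import reals ring.
From Stdlib Require Import FunctionalExtensionality PropExtensionality ClassicalEpsilon.
Set Implicit Arguments. Unset Strict Implicit. Unset Printing Implicit Defensive.
Import Order.TTheory GRing.Theory Num.Theory.
Local Open Scope ring_scope.

(** Fix [tau], a history [h] of player [i] and an action [u] such that
    [Pr(H_tau^i = h, U_tau^i = u) > 0].  Cutting paths at time [tau], this event splits into
    atoms on which the state [X_tau = x] and the histories [H_tau^-i = ho] of the others are
    fixed too.  On an atom, the path weight is the probability of the atom, times the
    probability [g_tau^i(h, u)] of playing [u], times a continuation weight that depends only
    on [x], the joint history at [tau] and the strategies used from [tau] on.  By unilateral
    sufficiency the atom has probability [F(h) Phi(x, ho)] given [K_tau^i], and [Phi] does not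
    depend on player [i]'s strategy; [F(h)] and [g_tau^i(h, u)] cancel in the conditional
    expectation, which becomes a [Phi]-weighted ratio of continuation means.  The immediate
    reward depends only on the step taken at [tau], so its continuation mean does not involve
    [h].  For the future rewards, a strategy of [i] played after [h] is matched by one played
    after [h'] that acts at [h' ++ z] as the former acts at [h ++ z]; the continuation means
    agree.  Hence [Q] takes the same value at histories with the same compression, and [Qhat]
    evaluates [Q] at any representative; [|Q| <= T] since every reward has modulus at most 1. *)

Section TupleSums.
Variables (R : nmodType) (X : finType).

Lemma sum_tuple0 (F : seq X -> R) : \sum_(s : 0.-tuple X) F s = F [::].
Proof. by rewrite (big_pred1 [tuple]) // => s; apply/esym/eqP; exact: tuple0. Qed.

Lemma sum_tupleS n (F : seq X -> R) :
  \sum_(s : n.+1.-tuple X) F s = \sum_(a : X) \sum_(s : n.-tuple X) F (a :: s).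
Proof.
rewrite pair_big (reindex (fun p : X * n.-tuple X => [tuple of p.1 :: p.2])) //=.
exists (fun t : n.+1.-tuple X => (thead t, [tuple of behead t])).
  by move=> [a s] _; congr pair; apply: val_inj.
by move=> t _; apply: val_inj; case: t => [[|a s] //].
Qed.

Lemma sum_tuple_cat n m k (F : seq X -> R) : n = (m + k)%N ->
  \sum_(s : n.-tuple X) F s =
  \sum_(s1 : m.-tuple X) \sum_(s2 : k.-tuple X) F (s1 ++ s2).
Proof.
move=> ->; elim: m F => [|m IH] F.
  by rewrite (sum_tuple0 (fun s1 => \sum_(s2 : k.-tuple X) F (s1 ++ s2))).
rewrite addSn sum_tupleS (sum_tupleS _ (fun s1 => \sum_(s2 : k.-tuple X) F (s1 ++ s2))).
by apply: eq_bigr => a _; rewrite (IH (fun s => F (a :: s))).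
Qed.

End TupleSums.

Lemma sum_pair (R : nmodType) (I J : finType) (F : I * J -> R) :
  \sum_p F p = \sum_i \sum_j F (i, j).
Proof. by rewrite pair_bigA; apply: eq_bigr => -[]. Qed.

Lemma sum_dffun_prod (R : comPzSemiRingType) (I : finType) (T_ : I -> finType)
    (f : forall i, T_ i -> R) :
  \sum_(a : {dffun forall i, T_ i}) \prod_i f i (a i) = \prod_i \sum_(b : T_ i) f i b.
Proof.
pose P_ i := [ffun b => f i b].
transitivity (\prod_i \sum_(b : T_ i) P_ i b); last first.
  by apply: eq_bigr => i _; apply: eq_bigr => b _; rewrite ffunE.
under [RHS]eq_bigr do rewrite (big_tag (fun i => P_ i)).
rewrite (bigA_distr_big_dep (fun i => tagged_with T_ i)) -(big_fprod 1 +%R P_).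
rewrite (reindex (@fprod_of_dffun I T_)); last first.
  by exists (@dffun_of_fprod I T_) => x _; [rewrite fprod_of_dffunK | rewrite dffun_of_fprodK].
apply: eq_bigr => a _; apply: eq_bigr => i _.
by rewrite /fprod_of_dffun fprodE ffunE.
Qed.

Lemma sup_norm_le (R : realType) (S : R -> Prop) (M : R) :
  (exists v, S v) -> (forall v, S v -> `|v| <= M) -> `|sup S| <= M.
Proof.
move=> [v0 Sv0] S_le.
have S_bounds w : S w -> - M <= w <= M by move/S_le; rewrite ler_norml.
rewrite ler_norml; apply/andP; split.
  apply: le_trans (ub_le_sup _ Sv0); first by case/andP: (S_bounds _ Sv0).
  by exists M => w /S_bounds/andP[].
by apply: ge_sup; [exists v0 | move=> w /S_bounds/andP[]].
Qed.

Lemma sum_ord_gt_le (R : numDomainType) n m : \sum_(t < n | (m < t)%N) (1 : R) <= n.-1%:R.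
Proof.
case: n => [|n]; first by rewrite big_ord0.
rewrite big_mkcond big_ord_recl /= add0r (@le_trans _ _ (\sum_(t < n) (1 : R))) //.
  by apply: ler_sum => t _; case: ifP.
by rewrite sumr_const card_ord.
Qed.

Lemma constant_on_fibers_factor (X Y Z : Type) (P : X -> Prop) (f : X -> Y) (q : X -> Z)
    (Inv : Z -> Prop) (z0 : Z) :
  Inv z0 -> (forall a, P a -> Inv (q a)) ->
  (forall a a', P a -> P a' -> f a = f a' -> q a = q a') ->
  exists qhat : Y -> Z, (forall b, Inv (qhat b)) /\ forall a, P a -> q a = qhat (f a).
Proof.
move=> Inv_z0 Inv_q q_fibers.
exists (fun b => if excluded_middle_informative (exists a, P a /\ f a = b) is left e
                 then q (proj1_sig (constructive_indefinite_description _ e)) else z0).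
split=> [b|a Pa].
  case: excluded_middle_informative => [e|//].
  by case: (constructive_indefinite_description _ e) => a [Pa _] /=; apply: Inv_q.
case: excluded_middle_informative => [e|]; last by case; exists a.
by case: (constructive_indefinite_description _ e) => a' [Pa' fa'] /=; apply: q_fibers.
Qed.

Lemma drop_tnth (X : Type) n (s : n.-tuple X) (k : 'I_n) :
  drop k s = tnth s k :: drop k.+1 s.
Proof. by rewrite (drop_nth (tnth s k)) ?size_tuple // -tnth_nth. Qed.

Section Dynamics.
Variables (R : realType) (G : game R).
Local Notation T := (horizon G).
Local Notation step := (jact G * noise G)%type.
Local Notation hists := (forall j : player G, hist_seq j).
Implicit Types (A B : profile G) (p : gpath G) (x : state G) (hs : hists).

Hypothesis P0_ge0 : forall x h, 0 <= P0 G x h.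
Hypothesis PW_distr : forall t, (t < T)%N -> is_distr (PW G t).
Hypothesis reward_bounded : forall t x a w j, (t < T)%N -> -1 <= (dyn G t x a w).2 j <= 1.

Definition next_hists t x hs (aw : step) : hists :=
  fun j => ((hs j).1, rcons (hs j).2 ((dyn G t x aw.1 aw.2).1.2 j)).

Fixpoint steps_prob A t x hs (s : seq step) : R :=
  if s is aw :: s' then
    (\prod_j A j t (hs j) (aw.1 j)) * PW G t aw.2 *
    steps_prob A t.+1 (dyn G t x aw.1 aw.2).1.1 (next_hists t x hs aw) s'
  else 1.

Fixpoint end_state t x (s : seq step) : state G :=
  if s is aw :: s' then end_state t.+1 (dyn G t x aw.1 aw.2).1.1 s' else x.

Definition run_infos t x (s : seq step) : forall j, seq (info G j) :=
  fun j => [seq o_z o j | o <- run t x s].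

Definition cat_hists hs (zs : forall j, seq (info G j)) : hists :=
  fun j => ((hs j).1, (hs j).2 ++ zs j).

Definition init_hists (h0 : jinit G) : hists := fun j => (h0 j, [::]).

Lemma size_run t x (s : seq step) : size (run t x s) = size s.
Proof. by elim: s t x => //= aw s IH t x; rewrite IH. Qed.

Lemma run_cat t x (s1 s2 : seq step) :
  run t x (s1 ++ s2) = run t x s1 ++ run (t + size s1) (end_state t x s1) s2.
Proof.
elim: s1 t x => [|aw s1 IH] t x /=; first by rewrite addn0.
by rewrite IH addSnnS.
Qed.

Lemma steps_prob_cat A t x hs (s1 s2 : seq step) :
  steps_prob A t x hs (s1 ++ s2) =
  steps_prob A t x hs s1 *
  steps_prob A (t + size s1) (end_state t x s1) (cat_hists hs (run_infos t x s1)) s2.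
Proof.
elim: s1 t x hs => [|aw s1 IH] t x hs /=.
  rewrite mul1r addn0; congr (steps_prob _ _ _ _ _).
  by apply: functional_extensionality_dep => j; rewrite /cat_hists cats0; case: (hs j).
rewrite IH -!mulrA addSnnS; congr (_ * (_ * (_ * steps_prob _ _ _ _ _))).
by apply: functional_extensionality_dep => j; rewrite /cat_hists /run_infos /= cat_rcons.
Qed.

Lemma steps_probE A t0 x hs (s : seq step) d :
  steps_prob A t0 x hs s = \prod_(t < size s)
    ((\prod_j A j (t0 + t)%N ((hs j).1, (hs j).2 ++ take t (run_infos t0 x s j))
                 ((nth d s t).1 j))
     * PW G (t0 + t)%N (nth d s t).2).
Proof.
elim: s t0 x hs => [|aw s IH] t0 x hs /=; first by rewrite big_ord0.
rewrite big_ord_recl /= IH addn0; congr (_ * _ * _).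
  by apply: eq_bigr => j _; rewrite cats0; case: (hs j).
apply: eq_bigr => t _; rewrite /bump /= add1n addSnnS; congr (_ * _).
by apply: eq_bigr => j _; rewrite /run_infos /= cat_rcons.
Qed.

Lemma path_probE A p :
  path_prob A p = P0 G p.1.1 p.1.2 * steps_prob A 0 p.1.1 (init_hists p.1.2) p.2.
Proof.
rewrite /path_prob; congr (_ * _); case: p => [[x0 h0] s] /=.
have [d _|no_step] := pickP (fun _ : step => true); last first.
  rewrite big1; last by move=> t _; have := no_step (tnth s t).
  by case: (tval s) => [|aw ?] //=; have := no_step aw.
rewrite (steps_probE _ _ _ _ _ d) /= size_tuple.
by apply: eq_bigr => t _; rewrite /act_at (tnth_nth d).
Qed.

Lemma valid_strategy_at (j : player G) (s : strategy j) t (hs : hist_seq j) :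
  valid_strategy s -> (t < T)%N -> size hs.2 = t ->
  [/\ forall u, 0 <= s t hs u, forall u, u \notin avail G t j -> s t hs u = 0 &
      \sum_u s t hs u = 1].
Proof.
case: hs => h0 zs /= V lt_tT size_zs; have size_zs_eq : size zs == t by rewrite size_zs.
exact: (V t lt_tT (h0, Tuple size_zs_eq)).
Qed.

Lemma sum_steps_prob A : valid_profile A ->
  forall n t x hs, (t + n <= T)%N -> (forall j, size (hs j).2 = t) ->
  \sum_(s : n.-tuple step) steps_prob A t x hs s = 1.
Proof.
move=> VA; elim=> [|n IH] t x hs le_tnT size_hs; first by rewrite sum_tuple0.
have lt_tT : (t < T)%N by rewrite (leq_trans _ le_tnT) // -addSnnS leq_addr.
rewrite (sum_tupleS _ (steps_prob A t x hs)) /=.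
transitivity (\sum_(aw : step) (\prod_j A j t (hs j) (aw.1 j)) * PW G t aw.2).
  apply: eq_bigr => aw _; rewrite -big_distrr /= IH ?mulr1 ?addSnnS //.
  by move=> j /=; rewrite size_rcons size_hs.
rewrite -(pair_bigA _ (fun (a : jact G) w => (\prod_j A j t (hs j) (a j)) * PW G t w)) /=.
under eq_bigr do rewrite -big_distrr /= (proj2 (PW_distr lt_tT)) mulr1.
rewrite (sum_dffun_prod (fun j b => A j t (hs j) b)).
by apply: big1 => j _; case: (valid_strategy_at (VA j) lt_tT (size_hs j)).
Qed.

Lemma size_outs p : size (outs p) = T.
Proof. by rewrite /outs size_run size_tuple. Qed.

Lemma path_prob_ge0 A p : valid_profile A -> 0 <= path_prob A p.
Proof.
move=> VA; rewrite /path_prob mulr_ge0 //; apply: prodr_ge0 => t _.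
rewrite mulr_ge0 ?(proj1 (PW_distr (ltn_ord t))) //; apply: prodr_ge0 => j _.
have size_hist : size (hist_at p j t).2 = t.
  by rewrite /hist_at /= size_takel // size_map size_outs ltnW.
by case: (valid_strategy_at (VA j) (ltn_ord t) size_hist).
Qed.

Definition prefix_state m p := end_state 0 p.1.1 (take m p.2).
Definition prefix_hists m p : hists :=
  cat_hists (init_hists p.1.2) (run_infos 0 p.1.1 (take m p.2)).
Definition suffix_mean A m x hs (Z : seq step -> R) :=
  \sum_(s : (T - m).-tuple step) steps_prob A m x hs s * Z s.

Lemma suffix_meanZ A m x hs c Z :
  suffix_mean A m x hs (fun s => c * Z s) = c * suffix_mean A m x hs Z.
Proof. by rewrite /suffix_mean big_distrr; apply: eq_bigr => s _; rewrite mulrCA. Qed.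

Lemma size_init_run_hists h0 x (s : seq step) j :
  size (cat_hists (init_hists h0) (run_infos 0 x s) j).2 = size s.
Proof. by rewrite /cat_hists /run_infos /= size_map size_run. Qed.

Lemma sum_path_split A m (Z : state G * jinit G -> seq step -> seq step -> R) :
  (m <= T)%N ->
  \sum_p path_prob A p * Z p.1 (take m p.2) (drop m p.2) =
  \sum_(xh : state G * jinit G) \sum_(s1 : m.-tuple step)
     P0 G xh.1 xh.2 * steps_prob A 0 xh.1 (init_hists xh.2) s1 *
     suffix_mean A m (end_state 0 xh.1 s1)
       (cat_hists (init_hists xh.2) (run_infos 0 xh.1 s1)) (Z xh s1).
Proof.
move=> le_mT; rewrite sum_pair; apply: eq_bigr => -[x0 h0] _ /=.
under eq_bigr do rewrite path_probE /=.
rewrite (@sum_tuple_cat _ _ _ m (T - m) (fun s => P0 G x0 h0 *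
  steps_prob A 0 x0 (init_hists h0) s * Z (x0, h0) (take m s) (drop m s))) ?subnKC //.
apply: eq_bigr => s1 _; rewrite /suffix_mean big_distrr /=; apply: eq_bigr => s2 _.
rewrite take_size_cat ?size_tuple // drop_size_cat ?size_tuple //.
by rewrite steps_prob_cat size_tuple add0n !mulrA.
Qed.

Lemma steps_prob_agree A B t x hs (s : seq step) :
  (forall j t', (t <= t')%N -> (t' < t + size s)%N -> A j t' = B j t') ->
  steps_prob A t x hs s = steps_prob B t x hs s.
Proof.
elim: s t x hs => [|aw s IH] t x hs AB //=.
congr (_ * _ * _); first by apply: eq_bigr => j _; rewrite AB // addnS ltnS leq_addr.
apply: IH => j t' lt_t_t' lt_t'; apply: AB; first exact: ltnW.
by rewrite /= addnS -addSn.
Qed.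

Lemma Pr_prefix_agree A B m (E : pred (gpath G))
    (Ep : state G * jinit G -> seq step -> bool) :
  valid_profile A -> valid_profile B -> (m <= T)%N ->
  (forall p, E p = Ep p.1 (take m p.2)) ->
  (forall j t, (t < m)%N -> A j t = B j t) ->
  Pr A E = Pr B E.
Proof.
move=> VA VB le_mT HE AB.
have PrE C : valid_profile C -> Pr C E = \sum_(xh : state G * jinit G)
    \sum_(s1 : m.-tuple step) P0 G xh.1 xh.2 * steps_prob C 0 xh.1 (init_hists xh.2) s1 *
    (Ep xh s1)%:R.
  move=> VC; rewrite /Pr big_mkcond.
  transitivity (\sum_p path_prob C p * (Ep p.1 (take m p.2))%:R).
    by apply: eq_bigr => p _; rewrite HE; case: ifP; rewrite ?mulr1 ?mulr0.
  rewrite (sum_path_split C (fun xh s1 _ => (Ep xh s1)%:R)) //.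
  apply: eq_bigr => xh _; apply: eq_bigr => s1 _.
  rewrite /suffix_mean -big_distrl /= sum_steps_prob ?subnKC ?mul1r // => j.
  by rewrite size_init_run_hists size_tuple.
rewrite (PrE A VA) (PrE B VB); apply: eq_bigr => xh _; apply: eq_bigr => s1 _.
by rewrite (steps_prob_agree (B := B)) // => j t _; rewrite size_tuple add0n; apply: AB.
Qed.

Lemma outs_split m p : (m <= T)%N ->
  outs p = run 0 p.1.1 (take m p.2) ++ run m (prefix_state m p) (drop m p.2).
Proof.
move=> le_mT; rewrite /outs -{1}(cat_take_drop m (tval p.2)) run_cat.
by rewrite size_takel // size_tuple.
Qed.

Lemma st_at_prefix (t : 'I_T) p : st_at p t = prefix_state t p.
Proof.
rewrite /st_at (outs_split p (ltnW (ltn_ord t))) map_cat nth_cat size_map size_run.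
by rewrite size_takel ?size_tuple ?(ltnW (ltn_ord t)) // ltnn subnn drop_tnth.
Qed.

Lemma hist_at_prefix m p j : (m <= T)%N -> hist_at p j m = prefix_hists m p j.
Proof.
move=> le_mT; rewrite /hist_at /prefix_hists /cat_hists /init_hists /run_infos /=.
by rewrite (outs_split p le_mT) map_cat take_size_cat // size_map size_run size_takel ?size_tuple.
Qed.

Lemma size_prefix_hists m p j : (m <= T)%N -> size (prefix_hists m p j).2 = m.
Proof.
by move=> le_mT; rewrite size_init_run_hists size_takel ?size_tuple.
Qed.

Lemma rew_at_suffix (tau : 'I_T) p j t : (tau <= t)%N ->
  rew_at p j t =
  nth 0 [seq o_r o j | o <- run tau (prefix_state tau p) (drop tau p.2)] (t - tau).
Proof.
move=> le_tau_t; rewrite /rew_at (outs_split p (ltnW (ltn_ord tau))) map_cat nth_cat.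
by rewrite size_map size_run size_takel ?size_tuple ?(ltnW (ltn_ord tau)) // ltnNge le_tau_t.
Qed.

Lemma hseq_inj j t : injective (@hseq R G j t).
Proof. by move=> [a s] [b s'] /= [-> /val_inj ->]. Qed.

Lemma exists_hist_at p j t : (t <= T)%N ->
  exists hj : hist j t, hist_at p j t == hseq hj.
Proof.
move=> le_tT; have size_zs : size (take t [seq o_z o j | o <- outs p]) == t.
  by rewrite size_takel // size_map size_outs.
by exists (p.1.2 j, Tuple size_zs).
Qed.

Lemma run_reward_norm_le j (s : seq step) t0 x k : (t0 + size s <= T)%N ->
  `|nth 0 [seq o_r o j | o <- run t0 x s] k| <= 1.
Proof.
elim: s t0 x k => [|aw s IH] t0 x [|k] /= le_T; rewrite ?nth_nil ?normr0 ?ler01 //.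
  by rewrite ler_norml reward_bounded // (leq_trans _ le_T) // addnS ltnS leq_addr.
by apply: IH; rewrite addSnnS.
Qed.

Lemma rew_at_norm_le p j t : `|rew_at p j t| <= 1.
Proof. by apply: run_reward_norm_le; rewrite add0n size_tuple. Qed.

Lemma CE_norm_le A (E : pred (gpath G)) (Y : gpath G -> R) M : valid_profile A ->
  0 <= M -> (forall p, `|Y p| <= M) -> `|CE A E Y| <= M.
Proof.
move=> VA M_ge0 Y_le; rewrite /CE.
have Pr_ge0 : 0 <= Pr A E by apply: sumr_ge0 => p _; exact: path_prob_ge0.
have [->|Pr_neq0] := eqVneq (Pr A E) 0; first by rewrite invr0 mulr0 normr0.
have Pr_gt0 : 0 < Pr A E by rewrite lt_def Pr_neq0.
rewrite normrM normfV (ger0_norm Pr_ge0) ler_pdivrMr // (le_trans (ler_norm_sum _ _ _)) //.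
rewrite /Pr big_distrr /=; apply: ler_sum => p _.
by rewrite normrM (ger0_norm (path_prob_ge0 _ VA)) mulrC ler_wpM2r ?path_prob_ge0.
Qed.

Lemma valid_merge_prof (i : player G) (gi g : profile G) : valid_strategy (gi i) ->
  (forall j, j != i -> valid_strategy (g j)) -> valid_profile (merge_prof i gi g).
Proof. by move=> Vi Vg j; rewrite /merge_prof; have [->|/Vg] := eqVneq j i. Qed.

Lemma valid_splice (j : player G) t (s1 s2 : strategy j) :
  valid_strategy s1 -> valid_strategy s2 -> valid_strategy (splice t s1 s2).
Proof. by move=> V1 V2 t' lt_t'T hs; rewrite /splice; case: ifP => _; [exact: V1|exact: V2]. Qed.

Lemma merge_prof_self (i : player G) (gi g : profile G) : @merge_prof _ _ i gi g i = gi i.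
Proof. by rewrite /merge_prof eqxx. Qed.

Lemma merge_prof_others (i j : player G) (gi g : profile G) :
  j != i -> @merge_prof _ _ i gi g j = g j.
Proof. by rewrite /merge_prof => /negbTE ->. Qed.

Section Atoms.
Variables (i : player G) (tau : 'I_T) (u : action G i).
Implicit Types (h : hist i tau) (ho : others_hist i tau).

Let le_tau_T : (tau <= T)%N := ltnW (ltn_ord tau).

Definition atom x h ho : pred (gpath G) :=
  fun p => [&& st_at p tau == x, hist_at p i tau == hseq h &
               [forall j, hist_at p (val j) tau == hseq (ho j)]].

Definition others_at p : others_hist i tau :=
  [ffun j => xchoose (exists_hist_at p (val j) le_tau_T)].

Lemma others_atP p ho :
  [forall j, hist_at p (val j) tau == hseq (ho j)] = (ho == others_at p).
Proof.
have chosen (j : {j | j != i}) := xchooseP (exists_hist_at p (val j) le_tau_T).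
apply/forallP/eqP => [ho_at|-> j]; last by rewrite ffunE chosen.
by apply/ffunP => j; apply: hseq_inj; rewrite ffunE -(eqP (chosen j)) -(eqP (ho_at j)).
Qed.

Lemma sum_event_atoms h (F : gpath G -> R) :
  \sum_(p | event h u p) F p =
  \sum_(x : state G) \sum_(ho : others_hist i tau)
     \sum_(p | atom x h ho p && (act_at p tau i == u)) F p.
Proof.
transitivity (\sum_p \sum_(x : state G) \sum_(ho : others_hist i tau)
    (if atom x h ho p && (act_at p tau i == u) then F p else 0)); last first.
  rewrite exchange_big; apply: eq_bigr => x _.
  by rewrite exchange_big; apply: eq_bigr => ho _; rewrite [RHS]big_mkcond.
rewrite big_mkcond; apply: eq_bigr => p _.
rewrite (bigD1 (st_at p tau)) //= [X in _ + X]big1 ?addr0; last first.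
  by move=> x /negbTE x_neq; rewrite big1 // => ho _; rewrite /atom eq_sym x_neq.
rewrite (bigD1 (others_at p)) //= [X in _ + X]big1 ?addr0; last first.
  by move=> ho /negbTE ho_neq; rewrite /atom others_atP ho_neq !andbF.
by rewrite /atom /event eqxx others_atP eqxx andbT.
Qed.

Lemma atomE x h ho (p0 p : gpath G) : atom x h ho p0 ->
  atom x h ho p =
  (prefix_state tau p == x) && [forall j, prefix_hists tau p j == prefix_hists tau p0 j].
Proof.
case/and3P => _ /eqP h_at /forallP ho_at.
rewrite /atom st_at_prefix !hist_at_prefix // -h_at hist_at_prefix //.
have -> : [forall j, hist_at p (val j) tau == hseq (ho j)] =
          [forall j : {j | j != i}, prefix_hists tau p (val j) == prefix_hists tau p0 (val j)].
  by apply: eq_forallb => j; rewrite -(eqP (ho_at j)) !hist_at_prefix.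
congr andb; apply/andP/forallP => [[/eqP hs_i /forallP hs_others] j|hs_eq].
  by have [->|ne] := eqVneq j i; [rewrite hs_i | exact: (hs_others (exist _ j ne))].
by split; [exact: hs_eq | apply/forallP => j; exact: hs_eq].
Qed.

Lemma prefix_hists_atom x h ho (p0 : gpath G) :
  atom x h ho p0 -> prefix_hists tau p0 i = hseq h.
Proof. by case/and3P => _ /eqP <- _; rewrite hist_at_prefix. Qed.

Lemma prefix_hists_atom_others x h h' ho (p0 q0 : gpath G) :
  atom x h ho p0 -> atom x h' ho q0 ->
  forall j, j != i -> prefix_hists tau p0 j = prefix_hists tau q0 j.
Proof.
case/and3P => _ _ /forallP ho_p0; case/and3P => _ _ /forallP ho_q0 j ne.
rewrite -!hist_at_prefix //.
by rewrite (eqP (ho_p0 (exist _ j ne))) (eqP (ho_q0 (exist _ j ne))).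
Qed.

Definition prefix_prob A x hs : R :=
  \sum_(xh : state G * jinit G) \sum_(s1 : tau.-tuple step)
    P0 G xh.1 xh.2 * steps_prob A 0 xh.1 (init_hists xh.2) s1 *
    ((end_state 0 xh.1 s1 == x) &&
     [forall j, cat_hists (init_hists xh.2) (run_infos 0 xh.1 s1) j == hs j])%:R.

Lemma sum_atom A x h ho (p0 : gpath G) (Z : seq step -> R) : atom x h ho p0 ->
  \sum_(p | atom x h ho p) path_prob A p * Z (drop tau p.2) =
  prefix_prob A x (prefix_hists tau p0) * suffix_mean A tau x (prefix_hists tau p0) Z.
Proof.
move=> atom_p0; set hs0 := prefix_hists tau p0.
pose Zx (xh : state G * jinit G) s1 s2 := ((end_state 0 xh.1 s1 == x) &&
  [forall j, cat_hists (init_hists xh.2) (run_infos 0 xh.1 s1) j == hs0 j])%:R * Z s2.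
transitivity (\sum_p path_prob A p * Zx p.1 (take tau p.2) (drop tau p.2)).
  rewrite big_mkcond; apply: eq_bigr => p _.
  by rewrite (atomE p atom_p0) /Zx; case: ifP; rewrite ?mul1r ?mul0r ?mulr0.
rewrite sum_path_split // /prefix_prob big_distrl; apply: eq_bigr => xh _.
rewrite big_distrl; apply: eq_bigr => s1 _ /=.
rewrite /Zx suffix_meanZ; case: andP => [[/eqP -> /forallP hs_eq]|_].
  have -> : cat_hists (init_hists xh.2) (run_infos 0 xh.1 s1) = hs0.
    by apply: functional_extensionality_dep => j; apply/eqP.
  by rewrite mul1r mulr1.
by rewrite mulr0n !(mul0r, mulr0).
Qed.

Lemma Pr_atom A x h ho (p0 : gpath G) : valid_profile A -> atom x h ho p0 ->
  Pr A (atom x h ho) = prefix_prob A x (prefix_hists tau p0).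
Proof.
move=> VA atom_p0; have := sum_atom A (fun _ => 1) atom_p0.
rewrite /suffix_mean; under [in RHS]eq_bigr do rewrite mulr1.
rewrite sum_steps_prob ?subnKC // => [|j]; last by rewrite size_prefix_hists.
by rewrite mulr1 => <-; apply: eq_bigr => p _; rewrite mulr1.
Qed.

Definition step_mean A x hs (Z : seq step -> R) : R :=
  \sum_(aw : step) (aw.1 i == u)%:R * (\prod_(j | j != i) A j tau (hs j) (aw.1 j)) *
     PW G tau aw.2 *
     suffix_mean A tau.+1 (dyn G tau x aw.1 aw.2).1.1 (next_hists tau x hs aw)
       (fun s => Z (aw :: s)).

Lemma suffix_mean_act A x hs (Z : seq step -> R) :
  suffix_mean A tau x hs (fun s => if s is aw :: _ then (aw.1 i == u)%:R * Z s else 0) =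
  A i tau (hs i) u * step_mean A x hs Z.
Proof.
rewrite /suffix_mean -subnSK // (sum_tupleS _ (fun s => steps_prob A tau x hs s *
  (if s is aw :: _ then (aw.1 i == u)%:R * Z s else 0))) /step_mean big_distrr.
apply: eq_bigr => aw _ /=.
rewrite /suffix_mean !big_distrr; apply: eq_bigr => s _ /=.
rewrite (bigD1 i) //=; case: eqP => [->|_]; last by rewrite !mul0r !mulr0 ?mul0r.
by rewrite !mul1r !mulrA.
Qed.

Lemma sum_atom_act A x h ho (p0 : gpath G) (Zx : state G -> seq step -> R)
    (Y : gpath G -> R) :
  valid_profile A -> (forall p, Y p = Zx (st_at p tau) (drop tau p.2)) ->
  atom x h ho p0 ->
  \sum_(p | atom x h ho p && (act_at p tau i == u)) path_prob A p * Y p =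
  Pr A (atom x h ho) * (A i tau (hseq h) u * step_mean A x (prefix_hists tau p0) (Zx x)).
Proof.
move=> VA HY atom_p0.
rewrite -(prefix_hists_atom atom_p0) -suffix_mean_act (Pr_atom VA atom_p0).
rewrite -(sum_atom _ _ atom_p0) big_mkcondr /=; apply: eq_bigr => p /and3P[/eqP st_p _ _].
rewrite HY st_p drop_tnth /act_at; case: eqP => _; last by rewrite mul0r mulr0.
by rewrite mul1r.
Qed.

Lemma Pr_event_prefix A B h :
  valid_profile A -> valid_profile B -> (forall j t, (t <= tau)%N -> A j t = B j t) ->
  Pr A (event h u) = Pr B (event h u).
Proof.
move=> VA VB AB; pose Ep (xh : state G * jinit G) s1 :=
  (cat_hists (init_hists xh.2) (run_infos 0 xh.1 (take tau s1)) i == hseq h) &&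
  (if drop tau s1 is aw :: _ then aw.1 i == u else false).
apply: (@Pr_prefix_agree _ _ tau.+1 _ Ep) => // p.
rewrite /event hist_at_prefix // /Ep -take_min (minn_idPl (leqnSn _)).
by rewrite -[tau.+1]/(1 + tau)%N -take_drop drop_tnth.
Qed.

Lemma step_mean_first A x hs (Z : seq step -> R) (y : step -> R) :
  valid_profile A -> (forall j, size (hs j).2 = tau) -> (forall aw s, Z (aw :: s) = y aw) ->
  step_mean A x hs Z = \sum_(aw : step) (aw.1 i == u)%:R *
     (\prod_(j | j != i) A j tau (hs j) (aw.1 j)) * PW G tau aw.2 * y aw.
Proof.
move=> VA size_hs HZ; apply: eq_bigr => aw _; congr (_ * _).
rewrite /suffix_mean; under eq_bigr do rewrite HZ.
rewrite -big_distrl /= sum_steps_prob ?mul1r ?subnKC // => j.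
by rewrite size_rcons size_hs.
Qed.

Lemma step_mean_first_eq A B x hs hs' (Z : seq step -> R) (y : step -> R) :
  valid_profile A -> valid_profile B ->
  (forall j, size (hs j).2 = tau) -> (forall j, size (hs' j).2 = tau) ->
  (forall j, j != i -> A j = B j) -> (forall j, j != i -> hs j = hs' j) ->
  (forall aw s, Z (aw :: s) = y aw) ->
  step_mean A x hs Z = step_mean B x hs' Z.
Proof.
move=> VA VB size_hs size_hs' AB hs_eq HZ.
rewrite (step_mean_first x VA size_hs HZ) (step_mean_first x VB size_hs' HZ).
apply: eq_bigr => aw _; congr (_ * _ * _ * _).
by apply: eq_bigr => j ne; rewrite AB // hs_eq.
Qed.

Lemma steps_prob_transfer A B (hh hh' : hist_seq i) :
  (forall j, j != i -> A j = B j) ->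
  (forall t zs, (tau < t)%N -> A i t (hh.1, hh.2 ++ zs) = B i t (hh'.1, hh'.2 ++ zs)) ->
  forall (s : seq step) t x hs hs' zs, (tau < t)%N ->
  (forall j, j != i -> hs j = hs' j) ->
  hs i = (hh.1, hh.2 ++ zs) -> hs' i = (hh'.1, hh'.2 ++ zs) ->
  steps_prob A t x hs s = steps_prob B t x hs' s.
Proof.
move=> AB_others AB_future.
elim=> [|aw s IH] t x hs hs' zs lt_tau_t hs_eq hs_i hs'_i //=.
congr (_ * _ * _).
  apply: eq_bigr => j _; have [->|ne] := eqVneq j i; first by rewrite hs_i hs'_i AB_future.
  by rewrite AB_others // hs_eq.
apply: (IH _ _ _ _ (rcons zs ((dyn G t x aw.1 aw.2).1.2 i))) => //.
- exact: ltnW.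
- by move=> j ne; rewrite /next_hists hs_eq.
- by rewrite /next_hists hs_i /= rcons_cat.
- by rewrite /next_hists hs'_i /= rcons_cat.
Qed.

Lemma step_mean_transfer A B x hs hs' (Z : seq step -> R) :
  (forall j, j != i -> A j = B j) ->
  (forall t zs, (tau < t)%N ->
     A i t ((hs i).1, (hs i).2 ++ zs) = B i t ((hs' i).1, (hs' i).2 ++ zs)) ->
  (forall j, j != i -> hs j = hs' j) ->
  step_mean A x hs Z = step_mean B x hs' Z.
Proof.
move=> AB_others AB_future hs_eq; apply: eq_bigr => aw _.
congr (_ * _ * _ * _); first by apply: eq_bigr => j ne; rewrite AB_others // hs_eq.
apply: eq_bigr => s _; congr (_ * _).
apply: (@steps_prob_transfer _ _ _ _ AB_others AB_future s tau.+1 _ _ _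
          [:: (dyn G tau x aw.1 aw.2).1.2 i]) => //.
- by move=> j ne; rewrite /next_hists hs_eq.
- by rewrite /next_hists -cats1; case: (hs i).
- by rewrite /next_hists -cats1; case: (hs' i).
Qed.

Definition reward_now x (s : seq step) : R := nth 0 [seq o_r o i | o <- run tau x s] 0.
Definition reward_future x (s : seq step) : R :=
  \sum_(t < T | (tau < t)%N) nth 0 [seq o_r o i | o <- run tau x s] (t - tau).

Lemma rew_at_now p : rew_at p i tau = reward_now (st_at p tau) (drop tau p.2).
Proof. by rewrite (@rew_at_suffix tau) // subnn st_at_prefix. Qed.

Lemma rew_at_future p :
  \sum_(t < T | (tau < t)%N) rew_at p i t = reward_future (st_at p tau) (drop tau p.2).
Proof.
rewrite /reward_future st_at_prefix; apply: eq_bigr => t lt_tau_t.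
by rewrite (@rew_at_suffix tau) // ltnW.
Qed.

Definition transfer_strategy (h h' : hist i tau) (s : strategy i) : strategy i :=
  fun t hh => if (tau < t)%N && (hh.1 == h'.1) && (take tau hh.2 == tval h'.2)
              then s t (h.1, tval h.2 ++ drop tau hh.2) else s t hh.

Lemma valid_transfer_strategy h h' s :
  valid_strategy s -> valid_strategy (transfer_strategy h h' s).
Proof.
move=> V t lt_tT hh; rewrite /transfer_strategy.
case: ifP => [/andP[/andP[lt_tau_t _] _]|_]; last exact: V.
apply: valid_strategy_at V lt_tT _.
by rewrite /= size_cat size_tuple size_drop /= size_tuple subnKC // ltnW.
Qed.

Definition set_strategy A (s : strategy i) : profile G := fun j =>
  if i =P j is ReflectT e then eq_rect i (@strategy R G) s j e else A j.

Lemma set_strategy_self A s : @set_strategy A s i = s.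
Proof. by rewrite /set_strategy; case: (i =P i) => // e; rewrite (eq_axiomK e). Qed.

Section Sufficiency.
Variables (K : finType) (iota1 : init_info G i -> K) (iota : nat -> K -> info G i -> K).
Variables (F : profile G -> K -> hist i tau -> R)
          (Phi : profile G -> K -> state G * others_hist i tau -> R).
Local Notation cmp h := (compress iota1 iota (hseq h)).

Definition comp_event (k : K) : pred (gpath G) :=
  fun p => compress iota1 iota (hist_at p i tau) == k.

Hypothesis Phi_others : forall A B, valid_profile A -> valid_profile B ->
  (forall j, j != i -> A j = B j) -> Phi A = Phi B.
Hypothesis USI_factor : forall A, valid_profile A -> forall k, 0 < Pr A (comp_event k) ->
  forall x hi ho, Pr A (fun p => comp_event k p && atom x hi ho p) / Pr A (comp_event k) =
                  F A k hi * Phi A k (x, ho).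

(* The representative matters only through its histories at [tau], which the atom fixes. *)
Definition atom_mean A h x ho (Zx : state G -> seq step -> R) : R :=
  if [pick p | atom x h ho p] is Some p0 then step_mean A x (prefix_hists tau p0) (Zx x)
  else 0.

Definition weighted_mean A h (Zx : state G -> seq step -> R) : R :=
  \sum_x \sum_(ho : others_hist i tau) Phi A (cmp h) (x, ho) * atom_mean A h x ho Zx.

Lemma Pr_comp_event_gt0 A h : valid_profile A ->
  0 < Pr A (event h u) -> 0 < Pr A (comp_event (cmp h)).
Proof.
move=> VA /lt_le_trans; apply; rewrite /Pr [leLHS]big_mkcond [leRHS]big_mkcond.
apply: ler_sum => p _; rewrite /event /comp_event.
have [->|_] /= := eqVneq (hist_at p i tau) (hseq h); rewrite ?eqxx.
all: by case: ifP => _; rewrite ?lexx ?path_prob_ge0.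
Qed.

Lemma Pr_atom_factor A h x ho : valid_profile A -> 0 < Pr A (event h u) ->
  Pr A (atom x h ho) = Pr A (comp_event (cmp h)) * F A (cmp h) h * Phi A (cmp h) (x, ho).
Proof.
move=> VA Pr_gt0; have Pk_gt0 := Pr_comp_event_gt0 VA Pr_gt0.
rewrite -mulrA -(USI_factor VA Pk_gt0) mulrC divfK ?gt_eqF //.
apply: eq_bigl => p; rewrite /comp_event /atom.
by have [->|_] := eqVneq (hist_at p i tau) (hseq h); rewrite ?eqxx ?andbF.
Qed.

Lemma sum_event_factor A h Zx (Y : gpath G -> R) :
  valid_profile A -> 0 < Pr A (event h u) ->
  (forall p, Y p = Zx (st_at p tau) (drop tau p.2)) ->
  \sum_(p | event h u p) path_prob A p * Y p =
  A i tau (hseq h) u * (Pr A (comp_event (cmp h)) * F A (cmp h) h) * weighted_mean A h Zx.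
Proof.
move=> VA Pr_gt0 HY; rewrite sum_event_atoms /weighted_mean big_distrr.
apply: eq_bigr => x _; rewrite big_distrr; apply: eq_bigr => ho _; rewrite /atom_mean.
case: pickP => [p0 atom_p0|no_atom]; last first.
  by rewrite big_pred0 => [|p]; [rewrite /= !mulr0 | rewrite no_atom].
by rewrite (sum_atom_act VA HY atom_p0) Pr_atom_factor //=; ring.
Qed.

Lemma Pr_event_factor A h : valid_profile A -> 0 < Pr A (event h u) ->
  Pr A (event h u) = A i tau (hseq h) u * (Pr A (comp_event (cmp h)) * F A (cmp h) h) *
                     weighted_mean A h (fun _ _ => 1).
Proof.
move=> VA Pr_gt0; rewrite -(sum_event_factor (Y := fun _ => 1)) //.
by apply: eq_bigr => p _; rewrite mulr1.
Qed.

Lemma event_factor_neq0 A h : valid_profile A -> 0 < Pr A (event h u) ->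
  Pr A (comp_event (cmp h)) * F A (cmp h) h != 0.
Proof.
move=> VA Pr_gt0; have := Pr_gt0; rewrite (Pr_event_factor VA Pr_gt0).
by apply: contraTneq => ->; rewrite mulr0 mul0r ltxx.
Qed.

Lemma atom_nonempty A h x ho : valid_profile A -> 0 < Pr A (event h u) ->
  Phi A (cmp h) (x, ho) != 0 -> exists p, atom x h ho p.
Proof.
move=> VA Pr_gt0 Phi_neq0; apply/existsP; apply: contraNT Phi_neq0 => /existsPn no_atom.
have := Pr_atom_factor x ho VA Pr_gt0; rewrite /Pr big_pred0 => [/esym/eqP|p].
  by rewrite mulf_eq0 (negbTE (event_factor_neq0 VA Pr_gt0)).
exact: negbTE (no_atom p).
Qed.

Lemma CE_event_ratio A h Zx (Y : gpath G -> R) :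
  valid_profile A -> 0 < Pr A (event h u) ->
  (forall p, Y p = Zx (st_at p tau) (drop tau p.2)) ->
  CE A (event h u) Y = weighted_mean A h Zx / weighted_mean A h (fun _ _ => 1).
Proof.
move=> VA Pr_gt0 HY; rewrite /CE (sum_event_factor VA Pr_gt0 HY).
have := Pr_gt0; rewrite (Pr_event_factor VA Pr_gt0) => /gt_eqF/negbT.
by rewrite mulf_eq0 negb_or => /andP[ac_neq0 _]; rewrite invfM mulrACA mulfV ?mul1r.
Qed.

Definition same_step_means A B h h' (Zx : state G -> seq step -> R) :=
  forall x ho p0 q0, atom x h ho p0 -> atom x h' ho q0 ->
  step_mean A x (prefix_hists tau p0) (Zx x) = step_mean B x (prefix_hists tau q0) (Zx x).

Lemma weighted_mean_eq A B h h' Zx : valid_profile A -> valid_profile B ->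
  (forall j, j != i -> A j = B j) -> cmp h = cmp h' ->
  0 < Pr A (event h u) -> 0 < Pr B (event h' u) ->
  same_step_means A B h h' Zx -> weighted_mean A h Zx = weighted_mean B h' Zx.
Proof.
move=> VA VB AB hk PrA_gt0 PrB_gt0 same_means.
rewrite /weighted_mean -hk (Phi_others VA VB AB); apply: eq_bigr => x _.
apply: eq_bigr => ho _; have [->|Phi_neq0] := eqVneq (Phi B (cmp h) (x, ho)) 0.
  by rewrite !mul0r.
congr (_ * _); rewrite /atom_mean.
have [p0 atom_p0] : exists p, atom x h ho p.
  by apply: (atom_nonempty VA PrA_gt0); rewrite (Phi_others VA VB AB).
have [q0 atom_q0] : exists q, atom x h' ho q.
  by apply: (atom_nonempty VB PrB_gt0); rewrite -hk.
case: pickP => [p1 atom_p1|/(_ p0)]; last by rewrite atom_p0.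
case: pickP => [q1 atom_q1|/(_ q0)]; last by rewrite atom_q0.
exact: (same_means x ho p1 q1 atom_p1 atom_q1).
Qed.

Lemma CE_event_eq A B h h' Zx (Y : gpath G -> R) : valid_profile A -> valid_profile B ->
  (forall j, j != i -> A j = B j) -> cmp h = cmp h' ->
  0 < Pr A (event h u) -> 0 < Pr B (event h' u) ->
  (forall p, Y p = Zx (st_at p tau) (drop tau p.2)) ->
  same_step_means A B h h' Zx -> same_step_means A B h h' (fun _ _ => 1) ->
  CE A (event h u) Y = CE B (event h' u) Y.
Proof.
move=> VA VB AB hk PrA_gt0 PrB_gt0 HY same_Z same_1.
rewrite (CE_event_ratio VA PrA_gt0 HY) (CE_event_ratio VB PrB_gt0 HY).
by congr (_ / _); apply: weighted_mean_eq.
Qed.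

Lemma same_step_means_first A B h h' Zx (y : state G -> step -> R) :
  valid_profile A -> valid_profile B -> (forall j, j != i -> A j = B j) ->
  (forall x aw s, Zx x (aw :: s) = y x aw) -> same_step_means A B h h' Zx.
Proof.
move=> VA VB AB HZ x ho p0 q0 atom_p0 atom_q0.
apply: (@step_mean_first_eq _ _ _ _ _ _ (y x)) => // [j|j|]; rewrite ?size_prefix_hists //.
exact: prefix_hists_atom_others atom_p0 atom_q0.
Qed.

Lemma CE_reward_now_eq (g gi gi' : profile G) h h' :
  (forall j, j != i -> valid_strategy (g j)) ->
  valid_strategy (gi i) -> valid_strategy (gi' i) -> cmp h = cmp h' ->
  0 < Pr (merge_prof i gi g) (event h u) -> 0 < Pr (merge_prof i gi' g) (event h' u) ->
  CE (merge_prof i gi g) (event h u) (fun p => rew_at p i tau) =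
  CE (merge_prof i gi' g) (event h' u) (fun p => rew_at p i tau).
Proof.
move=> Vg Vi Vi' hk PrA_gt0 PrB_gt0.
have VA := valid_merge_prof Vi Vg; have VB := valid_merge_prof Vi' Vg.
have AB j : j != i -> @merge_prof _ _ i gi g j = @merge_prof _ _ i gi' g j.
  by move=> ne; rewrite !merge_prof_others.
apply: (CE_event_eq VA VB AB hk PrA_gt0 PrB_gt0 rew_at_now).
  exact: (same_step_means_first (y := fun x aw => (dyn G tau x aw.1 aw.2).2 i)).
exact: (same_step_means_first (y := fun _ _ => 1)).
Qed.

Lemma future_value_transfer (g gi gi' gt : profile G) h h' :
  (forall j, j != i -> valid_strategy (g j)) ->
  valid_strategy (gi i) -> valid_strategy (gi' i) -> cmp h = cmp h' ->
  0 < Pr (merge_prof i gi g) (event h u) -> 0 < Pr (merge_prof i gi' g) (event h' u) ->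
  valid_strategy (gt i) ->
  exists gt' : profile G, valid_strategy (gt' i) /\
    CE (merge_prof i (splice_prof i tau gi gt) g) (event h u)
       (fun p => \sum_(t < T | (tau < t)%N) rew_at p i t) =
    CE (merge_prof i (splice_prof i tau gi' gt') g) (event h' u)
       (fun p => \sum_(t < T | (tau < t)%N) rew_at p i t).
Proof.
move=> Vg Vi Vi' hk PrA_gt0 PrB_gt0 Vt.
pose gt' := set_strategy gt (transfer_strategy h h' (gt i)).
have Vt' : valid_strategy (gt' i).
  by rewrite /gt' set_strategy_self; exact: valid_transfer_strategy.
exists gt'; split => //.
have VA := @valid_merge_prof i (splice_prof i tau gi gt) g (valid_splice tau Vi Vt) Vg.
have VB := @valid_merge_prof i (splice_prof i tau gi' gt') g (valid_splice tau Vi' Vt') Vg.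
have before_tau (gi0 gt0 : profile G) j t : (t <= tau)%N ->
    @merge_prof _ _ i (splice_prof i tau gi0 gt0) g j t = @merge_prof _ _ i gi0 g j t.
  by move=> le_t_tau; rewrite /merge_prof /splice_prof /splice; case: ifP; rewrite ?le_t_tau.
have AB j : j != i -> @merge_prof _ _ i (splice_prof i tau gi gt) g j =
                      @merge_prof _ _ i (splice_prof i tau gi' gt') g j.
  by move=> ne; rewrite !merge_prof_others.
have same_means Zx : same_step_means (merge_prof i (splice_prof i tau gi gt) g)
                        (merge_prof i (splice_prof i tau gi' gt') g) h h' Zx.
  move=> x ho p0 q0 atom_p0 atom_q0; apply: step_mean_transfer => //;
    last exact: prefix_hists_atom_others atom_p0 atom_q0.
  move=> t zs lt_tau_t; rewrite (prefix_hists_atom atom_p0) (prefix_hists_atom atom_q0).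
  rewrite !merge_prof_self /splice_prof /splice leqNgt lt_tau_t /gt' set_strategy_self.
  rewrite /transfer_strategy lt_tau_t /= eqxx take_size_cat ?size_tuple // eqxx.
  by rewrite drop_size_cat ?size_tuple.
apply: (CE_event_eq VA VB AB hk _ _ rew_at_future (same_means _) (same_means _)).
  by rewrite (Pr_event_prefix _ VA (valid_merge_prof Vi Vg)) // => j t; exact: before_tau.
by rewrite (Pr_event_prefix _ VB (valid_merge_prof Vi' Vg)) // => j t; exact: before_tau.
Qed.

Lemma Qfun_eq (g gi gi' : profile G) h h' :
  (forall j, j != i -> valid_strategy (g j)) ->
  valid_strategy (gi i) -> valid_strategy (gi' i) -> cmp h = cmp h' ->
  0 < Pr (merge_prof i gi g) (event h u) -> 0 < Pr (merge_prof i gi' g) (event h' u) ->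
  Qfun g gi h u = Qfun g gi' h' u.
Proof.
move=> Vg Vi Vi' hk PrA_gt0 PrB_gt0.
rewrite /Qfun (CE_reward_now_eq Vg Vi Vi' hk PrA_gt0 PrB_gt0); congr (_ + sup _).
apply: functional_extensionality => v; apply: propositional_extensionality.
split=> -[gt [Vt ->]].
  have [gt' [Vt' ->]] := future_value_transfer Vg Vi Vi' hk PrA_gt0 PrB_gt0 Vt.
  by exists gt'.
have [gt' [Vt' ->]] := future_value_transfer Vg Vi' Vi (esym hk) PrB_gt0 PrA_gt0 Vt.
by exists gt'.
Qed.

End Sufficiency.

Lemma Qfun_norm_le (g gi : profile G) h :
  (forall j, j != i -> valid_strategy (g j)) -> valid_strategy (gi i) ->
  `|Qfun g gi h u| <= T%:R.
Proof.
move=> Vg Vi; have T_gt0 : (0 < T)%N by rewrite (leq_ltn_trans _ (ltn_ord tau)).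
have -> : T%:R = 1 + T.-1%:R :> R by rewrite -mulrS prednK.
rewrite /Qfun (le_trans (ler_normD _ _)) // lerD //.
  by apply: CE_norm_le => // [|p]; [exact: valid_merge_prof | exact: rew_at_norm_le].
apply: sup_norm_le => [|v [gt [Vt ->]]].
  by exists (CE (merge_prof i (splice_prof i tau gi gi) g) (event h u)
                (fun p => \sum_(t < T | (tau < t)%N) rew_at p i t)), gi.
apply: CE_norm_le => // [|p].
  exact: (@valid_merge_prof i (splice_prof i tau gi gt) g (valid_splice tau Vi Vt) Vg).
rewrite (le_trans (ler_norm_sum _ _ _)) // (le_trans _ (sum_ord_gt_le _ T tau)) //.
by apply: ler_sum => t _; exact: rew_at_norm_le.
Qed.

End Atoms.
End Dynamics.

Theorem lemma10 (R : realType) (G : game R) (i : player G)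
  (K : finType) (iota1 : init_info G i -> K)
  (iota : nat -> K -> info G i -> K) (g : profile G) :
  game_ok G ->
  USI iota1 iota ->
  (forall j, j != i -> valid_strategy (g j) /\ fully_mixed (g j)) ->
  forall tau : 'I_(horizon G),
  exists Qhat : K -> action G i -> R,
    (forall k u, - (horizon G)%:R <= Qhat k u <= (horizon G)%:R) /\
    (forall (gi : profile G), valid_strategy (gi i) ->
     forall (h : hist i tau) (u : action G i),
       0 < Pr (merge_prof i gi g) (event h u) ->
       Qfun g gi h u = Qhat (compress iota1 iota (hseq h)) u).
Proof.
move=> [[P0_ge0 _] PW_distr _ reward_bounded _] [F [Phi [_ Phi_others USI_factor]]] g_ok tau.
have Vg j : j != i -> valid_strategy (g j) := fun ne => (g_ok j ne).1.
pose P (a : profile G * hist i tau * action G i) :=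
  valid_strategy (a.1.1 i) /\ 0 < Pr (merge_prof i a.1.1 g) (event a.1.2 a.2).
pose key (a : profile G * hist i tau * action G i) := (compress iota1 iota (hseq a.1.2), a.2).
pose Q (a : profile G * hist i tau * action G i) := Qfun g a.1.1 a.1.2 a.2.
pose in_range (v : R) := - (horizon G)%:R <= v <= (horizon G)%:R.
have Q_range a : P a -> in_range (Q a).
  by move=> [Vi _]; rewrite /in_range -ler_norml; apply: Qfun_norm_le.
have Q_fibers a a' : P a -> P a' -> key a = key a' -> Q a = Q a'.
  move: a a' => [[gi h] u] [[gi' h'] u'] [Vi Pr_gt0] [Vi' Pr'_gt0] [hk eq_u]; subst u'.
  apply: (@Qfun_eq _ _ P0_ge0 PW_distr _ _ _ _ iota1 iota
            (fun A => F A tau) (fun A => Phi A tau)) => //.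
    by move=> A B VA VB AB; rewrite (Phi_others A B).
  by move=> A VA k; case: (USI_factor A VA tau k) => _ [].
have [|Qhat [Qhat_range Qhat_eq]] :=
  @constant_on_fibers_factor _ _ _ P key Q in_range 0 _ Q_range Q_fibers.
  by rewrite /in_range oppr_le0 ler0n.
exists (fun k u => Qhat (k, u)).
by split=> [k u|gi Vi h u Pr_gt0]; [exact: Qhat_range | exact: (Qhat_eq (gi, h, u))].
Qed.
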